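(* Let $d\geq 2$, energies $E_1\leq\dots\leq E_d$, inverse temperatures $\alpha>\beta\geq 0$, and $\gamma_k=e^{-\alpha E_k}/\sum_i e^{-\alpha E_i}$, $\Gamma_k=e^{-\beta E_k}/\sum_i e^{-\beta E_i}$. Define the probability vectors $\tilde{\boldsymbol{\gamma}}$ and $\tilde{\boldsymbol{\Gamma}}$ by $$\tilde{\gamma}_1=\frac{\Gamma_1(\gamma_1-\gamma_d)}{\Gamma_1(1-\gamma_d)-\Gamma_d(1-\gamma_1)},\quad \tilde{\gamma}_k=\frac{1-\tilde{\gamma}_1}{1-\gamma_1}\gamma_k\ (k\neq 1),$$ $$\tilde{\Gamma}_d=\frac{\Gamma_d(\gamma_1-\gamma_d)}{\Gamma_1(1-\gamma_d)-\Gamma_d(1-\gamma_1)},\quad \tilde{\Gamma}_k=\frac{1-\tilde{\Gamma}_d}{1-\Gamma_d}\Gamma_k\ (k\neq d).$$ Then $\tilde{\boldsymbol{\gamma}}\in F_{AB}$ and $\tilde{\boldsymbol{\Gamma}}\in F_{AB}$. Moreover, the convergence to these states with the number of strokes $N$ is exponential: there exist states in $F^{(N)}_{AB}$ whose distance to $\tilde{\boldsymbol{\gamma}}$ (respectively $\tilde{\boldsymbol{\Gamma}}$) decays exponentially in $N$.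
   Context: Incoherent states are probability vectors in $\mathbb{R}^d$. For a full-support probability vector $\mathbf{g}$, $\mathbf{p}\succ_{\mathbf{g}}\mathbf{q}$ (thermomajorisation) means: ordering indices by a permutation $\pi$ with $p_{\pi_i}/g_{\pi_i}$ non-increasing in $i$, the piecewise linear curve through $\left(\sum_{i\leq j}g_{\pi_i},\sum_{i\leq j}p_{\pi_i}\right)$, $j=0,\dots,d$, is nowhere below the analogous curve of $\mathbf{q}$. For $N\geq 1$, $F^{(N)}_{AB}$ (states achievable after $N$ strokes) is the set of convex combinations of vectors $\mathbf{p}^{(N-1)}$ obtainable by a chain $\boldsymbol{\gamma}=\mathbf{p}^{(0)}\succ_{\boldsymbol{\Gamma}}\mathbf{p}^{(1)}\succ_{\boldsymbol{\gamma}}\mathbf{p}^{(2)}\succ_{\boldsymbol{\Gamma}}\cdots\mathbf{p}^{(N-1)}$ or by a chain $\boldsymbol{\Gamma}=\mathbf{p}^{(0)}\succ_{\boldsymbol{\gamma}}\mathbf{p}^{(1)}\succ_{\boldsymbol{\Gamma}}\cdots\mathbf{p}^{(N-1)}$. $F_{AB}$ is the set of states achievable as $N\to\infty$, i.e., the closure of $\bigcup_N F^{(N)}_{AB}$. *)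

From mathcomp Require Import all_boot all_order perm all_algebra.
From mathcomp Require Import reals sequences exp.
Set Implicit Arguments. Unset Strict Implicit. Unset Printing Implicit Defensive.
Import Order.TTheory GRing.Theory Num.Theory.
Local Open Scope ring_scope.

Section Defs.
Variables (R : realType) (d : nat).

Definition vec := 'I_d -> R.

Definition prob_vec (p : vec) : Prop :=
  (forall i, 0 <= p i) /\ \sum_i p i = 1.

Definition thermo_sorted (g p : vec) (pi : {perm 'I_d}) : Prop :=
  forall i j : 'I_d, (i <= j)%N -> p (pi j) / g (pi j) <= p (pi i) / g (pi i).

Definition clamp01 (t : R) : R := Num.min 1 (Num.max 0 t).

(* The piecewise linear curve through the points
   (sum_{i<=j} g_{pi_i}, sum_{i<=j} p_{pi_i}), j = 0..d, evaluated at x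
   in [0, sum_i g_i]: on the j-th segment its slope is p_{pi_j}/g_{pi_j}. *)
Definition thermo_curve (g p : vec) (pi : {perm 'I_d}) (x : R) : R :=
  \sum_(j < d) p (pi j) *
     clamp01 ((x - \sum_(i < d | (i < j)%N) g (pi i)) / g (pi j)).

Definition thermomaj (g p q : vec) : Prop :=
  exists pip piq : {perm 'I_d},
    thermo_sorted g p pip /\ thermo_sorted g q piq /\
    forall x, 0 <= x <= \sum_i g i ->
      thermo_curve g q piq x <= thermo_curve g p pip x.

Definition bath (gam Gam : vec) (b : bool) : vec := if b then gam else Gam.

(* p is the endpoint p^(N-1) of an admissible chain of N-1 strokes,
   starting at gam (b = true) or Gam (b = false), alternating baths. *)
Definition chain_reach (gam Gam : vec) (N : nat) (p : vec) : Prop :=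
  (0 < N)%N /\
  exists (b : bool) (c : nat -> vec),
    c 0%N = bath gam Gam b /\
    (forall k, (k <= N.-1)%N -> prob_vec (c k)) /\
    (forall k, (k < N.-1)%N ->
       thermomaj (bath gam Gam (if odd k then b else ~~ b)) (c k) (c k.+1)) /\
    p = c N.-1.

Definition F_N (gam Gam : vec) (N : nat) (p : vec) : Prop :=
  exists (n : nat) (w : 'I_n -> R) (v : 'I_n -> vec),
    (forall i, 0 <= w i) /\ \sum_i w i = 1 /\
    (forall i, chain_reach gam Gam N (v i)) /\
    p = (fun k => \sum_i w i * v i k).

Definition dist1 (p q : vec) : R := \sum_k `|p k - q k|.

(* F_AB : closure of the union of the F^(N)_AB *)
Definition F_AB (gam Gam : vec) (p : vec) : Prop :=
  forall eps : R, 0 < eps ->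
    exists N q, F_N gam Gam N q /\ dist1 p q < eps.

Definition gibbs (E : vec) (a : R) : vec :=
  fun k => expR (- (a * E k)) / \sum_i expR (- (a * E i)).

End Defs.

Lemma lt_pred_d (d : nat) : (1 < d)%N -> (d.-1 < d)%N.
Proof. by case: d. Qed.

Definition ord_first (d : nat) (hd : (1 < d)%N) : 'I_d := Ordinal (ltnW hd).
Definition ord_last (d : nat) (hd : (1 < d)%N) : 'I_d := Ordinal (lt_pred_d hd).

Section Tilde.
Variables (R : realType) (d : nat) (hd : (1 < d)%N).
Variables (gam Gam : vec R d).

Definition tilde_den : R :=
  Gam (ord_first hd) * (1 - gam (ord_last hd))
  - Gam (ord_last hd) * (1 - gam (ord_first hd)).

Definition tilde_gam : vec R d := fun k =>
  let t1 := Gam (ord_first hd) * (gam (ord_first hd) - gam (ord_last hd)) / tilde_den in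
  if k == ord_first hd then t1
  else (1 - t1) / (1 - gam (ord_first hd)) * gam k.

Definition tilde_Gam : vec R d := fun k =>
  let td := Gam (ord_last hd) * (gam (ord_first hd) - gam (ord_last hd)) / tilde_den in
  if k == ord_last hd then td
  else (1 - td) / (1 - Gam (ord_last hd)) * Gam k.
End Tilde.

From mathcomp Require Import all_boot all_order perm all_algebra.
From mathcomp Require Import reals sequences exp.
From mathcomp Require Import boolp classical_sets topology normedtype.
From mathcomp Require Import ring lra.
Set Implicit Arguments. Unset Strict Implicit. Unset Printing Implicit Defensive.
Import Order.TTheory GRing.Theory Num.Theory numFieldNormedType.Exports.
Local Open Scope ring_scope.

(* A Gibbs-preserving stochastic matrix maps every state to one it thermomajorises:
   the thermomajorisation curve of p at x is the largest value of sum_k s_k p_k over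
   weights 0 <= s <= 1 with sum_k s_k g_k = x, and the curve of M p at x is such a sum.
   Two strokes of this kind suffice. The cold one (bath gamma) pins level 1 at
   p_d + c (1 - p_d) with c = (gamma_1 - gamma_d) / (1 - gamma_d), the hot one (bath Gamma)
   pins level d at (Gamma_d / Gamma_1) p_1, and both spread the remaining mass like their
   bath. A state produced by a stroke is thus determined by its pinned population, on which
   a hot stroke followed by a cold one (or conversely) acts by an affine map of slope
   (Gamma_d / Gamma_1) (1 - c) < 1 whose fixed point is the pinned population of the tilde
   state. Alternating chains therefore converge geometrically; starting them at gamma or at
   Gamma according to the parity of N gives chains of every length. *)

Section Clamp.
Variable R : realType.
Implicit Types t h y : R.

Lemma clamp01_ge0 t : 0 <= clamp01 t.
Proof. by rewrite /clamp01 le_min ler01 le_max lexx. Qed.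

Lemma clamp01_le1 t : clamp01 t <= 1.
Proof. by rewrite /clamp01 ge_min lexx. Qed.

Lemma clamp01_gt0 t : 0 < clamp01 t -> 0 < t.
Proof. by rewrite /clamp01 lt_min lt_max ltxx => /andP[]. Qed.

Lemma clamp01_lt1 t : clamp01 t < 1 -> t < 1.
Proof. by rewrite /clamp01 gt_min ltxx gt_max ltr01. Qed.

Lemma mulr_clamp01 h y : 0 < h -> h * clamp01 (y / h) = Num.min h (Num.max 0 y).
Proof.
move=> h0; rewrite /clamp01 minr_pMr ?maxr_pMr ?ltW // mulr1 mulr0.
by rewrite mulrCA divff ?mulr1 ?gt_eqF.
Qed.

End Clamp.

Section LorenzCurve.
Variables (R : realType) (d : nat).
Local Notation vec := (vec R d).

Lemma prefix_sumS (F : vec) (o : 'I_d) :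
  \sum_(i < d | (i < o.+1)%N) F i = F o + \sum_(i < d | (i < o)%N) F i.
Proof.
rewrite (bigD1 o) //; congr (_ + _); apply: eq_bigl => i.
by rewrite -val_eqE ltnS leq_eqVlt; case: ltngtP.
Qed.

Lemma prefix_sum_le (F : vec) (m n : nat) : (forall i, 0 <= F i) -> (m <= n)%N ->
  \sum_(i < d | (i < m)%N) F i <= \sum_(i < d | (i < n)%N) F i.
Proof.
move=> F0 lemn; rewrite [leRHS](bigID (fun i : 'I_d => (i < m)%N)) /=.
have -> : \sum_(i < d | (i < n)%N && (i < m)%N) F i = \sum_(i < d | (i < m)%N) F i.
  apply: eq_bigl => i; case: (ltnP i m) => [him|]; last by rewrite andbF.
  by rewrite (leq_trans him lemn).
by rewrite lerDl sumr_ge0.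
Qed.

(* The fraction of the j-th segment (of width F j) of the curve lying left of x. *)
Definition curve_weight (F : vec) (x : R) (j : 'I_d) : R :=
  clamp01 ((x - \sum_(i < d | (i < j)%N) F i) / F j).

Lemma thermo_curveE (g p : vec) pi (x : R) :
  thermo_curve g p pi x = \sum_j p (pi j) * curve_weight (fun i => g (pi i)) x j.
Proof. by []. Qed.

Lemma sum_curve_weight_prefix (F : vec) (x : R) : (forall i, 0 < F i) -> 0 <= x ->
  forall n, (n <= d)%N ->
  \sum_(j < d | (j < n)%N) F j * curve_weight F x j
    = Num.min x (\sum_(j < d | (j < n)%N) F j).
Proof.
move=> F0 x0; elim=> [|n IH] ltnd; first by rewrite !big_pred0 //; apply/esym/min_idPr.
pose o := Ordinal ltnd.
have splitS (G : vec) : \sum_(i < d | (i < n.+1)%N) G i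
    = G o + \sum_(i < d | (i < n)%N) G i by exact: (prefix_sumS G o).
rewrite !splitS IH; last exact: ltnW.
rewrite /curve_weight mulr_clamp01 //; change (nat_of_ord o) with n.
have := F0 o; move: (F o) (\sum_(j < d | (j < n)%N) F j) => f S f0.
case: (leP x S) => h1; case: (leP x (f + S)) => h4;
 (case: (leP 0 (x - S)) => h2; [case: (leP f (x - S)) | case: (leP f 0)] => h3); lra.
Qed.

Lemma sum_curve_weight (F : vec) (x : R) : (forall i, 0 < F i) ->
  0 <= x <= \sum_j F j -> \sum_j F j * curve_weight F x j = x.
Proof.
move=> F0 /andP[x0 x1]; have all_lt (G : vec) : \sum_j G j = \sum_(j < d | (j < d)%N) G j.
  by apply: eq_bigl => j; rewrite ltn_ord.
by rewrite all_lt sum_curve_weight_prefix // -all_lt; apply/min_idPl.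
Qed.

Lemma curve_weight_order (F : vec) (x : R) (j k : 'I_d) : (forall i, 0 < F i) ->
  curve_weight F x k < 1 -> 0 < curve_weight F x j -> (j <= k)%N.
Proof.
move=> F0 /clamp01_lt1 + /clamp01_gt0.
rewrite ltr_pdivrMr // ltr_pdivlMr // mul1r mul0r subr_gt0 => ltxk ltjx.
rewrite leqNgt; apply/negP => /(prefix_sum_le (fun i => ltW (F0 i))).
by rewrite prefix_sumS; lra.
Qed.

End LorenzCurve.

Section Thermomajorisation.
Variables (R : realType) (d : nat).
Local Notation vec := (vec R d).

Lemma thermo_curve_threshold (g p : vec) (pi : {perm 'I_d}) (x : R) :
  (forall k, 0 < g k) -> (forall k, 0 <= p k) -> thermo_sorted g p pi ->
  0 <= x <= \sum_k g k ->
  exists lam, thermo_curve g p pi x = lam * x + \sum_k g k * Num.max 0 (p k / g k - lam).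
Proof.
move=> g0 p0 sorted_pi x_range.
pose G j := g (pi j); pose u := curve_weight G x; pose r k := p k / g k.
have G0 j : 0 < G j by exact: g0.
(* The slope at x: segments steeper than lam are full and flatter ones empty. *)
pose lam := \big[Num.max/0]_(j | u j < 1) r (pi j).
have lam_le j : u j < 1 -> r (pi j) <= lam.
  exact: (@le_bigmax_cond _ _ _ 0 j (fun k => u k < 1) (fun k => r (pi k))).
have lam_ge j : 0 < u j -> lam <= r (pi j).
  move=> uj; apply/bigmax_leP; split; first by rewrite divr_ge0 // ltW.
  by move=> k uk; apply: sorted_pi; apply: (curve_weight_order G0 uk uj).
have threshold j : u j * (r (pi j) - lam) = Num.max 0 (r (pi j) - lam).
  have u0 : 0 <= u j := clamp01_ge0 _.
  have u1 : u j <= 1 := clamp01_le1 _.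
  have [lam_r|r_lam] := leP lam (r (pi j)).
    have [/lam_le r_lam|u_1] := ltP (u j) 1.
      have -> : r (pi j) - lam = 0 by lra.
      by rewrite mulr0 maxxx.
    have -> : u j = 1 by lra.
    by rewrite mul1r; apply/esym/max_idPr; lra.
  have -> : u j = 0 by case: (ltP 0 (u j)) => [/lam_ge|]; lra.
  by rewrite mul0r; apply/esym/max_idPl; lra.
have mass : \sum_j G j * u j = x.
  apply: sum_curve_weight => //; rewrite /G.
  by rewrite (reindex_inj (@perm_inj _ pi)) in x_range.
exists lam; rewrite thermo_curveE -/G -/u -[in lam * x]mass mulr_sumr.
rewrite [X in _ = _ + X](reindex_inj (@perm_inj _ pi)) -big_split; apply: eq_bigr => j _.
rewrite /= -threshold /r -{1}(divfK (lt0r_neq0 (G0 j)) (p (pi j))) /G; ring.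
Qed.

Lemma weighted_sum_le_threshold (g p s : vec) (lam : R) :
  (forall k, 0 < g k) -> (forall k, 0 <= s k <= 1) ->
  \sum_k s k * p k
    <= lam * (\sum_k s k * g k) + \sum_k g k * Num.max 0 (p k / g k - lam).
Proof.
move=> g0 s01; rewrite mulr_sumr -big_split; apply: ler_sum => k _ /=.
have /andP[s0 s1] := s01 k; have gk := g0 k.
rewrite -{1}(divfK (lt0r_neq0 gk) (p k)); move: (p k / g k) => r.
have m1 : r - lam <= Num.max 0 (r - lam) by rewrite le_max lexx orbT.
have m0 : 0 <= Num.max 0 (r - lam) by rewrite le_max lexx.
move: (Num.max 0 (r - lam)) m1 m0 => m m1 m0.
have h1 : 0 <= s k * g k * (m - (r - lam)) by rewrite !mulr_ge0 ?subr_ge0 // ltW.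
have h2 : 0 <= (1 - s k) * (g k * m) by rewrite !mulr_ge0 ?subr_ge0 // ltW.
nra.
Qed.

Lemma thermo_curve_ge_weighted (g p s : vec) (pi : {perm 'I_d}) :
  (forall k, 0 < g k) -> (forall k, 0 <= p k) -> thermo_sorted g p pi ->
  (forall k, 0 <= s k <= 1) ->
  \sum_k s k * p k <= thermo_curve g p pi (\sum_k s k * g k).
Proof.
move=> g0 p0 sorted_pi s01.
have [|lam ->] := thermo_curve_threshold (x := \sum_k s k * g k) g0 p0 sorted_pi.
  apply/andP; split; [apply: sumr_ge0 | apply: ler_sum] => k _;
  have /andP[s0 s1] := s01 k; have gk := ltW (g0 k); [exact: mulr_ge0 | exact: ler_piMl].
exact: weighted_sum_le_threshold.
Qed.

Lemma thermo_curve_stochastic (g p q : vec) (M : 'I_d -> 'I_d -> R)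
    (pi : {perm 'I_d}) (x : R) :
  (forall k, 0 < g k) -> (forall i j, 0 <= M i j) -> (forall j, \sum_i M i j = 1) ->
  (forall i, \sum_j M i j * g j = g i) -> (forall i, q i = \sum_j M i j * p j) ->
  0 <= x <= \sum_k g k ->
  exists2 s : vec, (forall k, 0 <= s k <= 1) &
    \sum_k s k * g k = x /\ thermo_curve g q pi x = \sum_k s k * p k.
Proof.
move=> g0 M0 M_col M_gibbs qE x_range.
pose u := curve_weight (fun i => g (pi i)) x.
have mass : \sum_j g (pi j) * u j = x.
  apply: sum_curve_weight => [j|]; first exact: g0.
  by rewrite (reindex_inj (@perm_inj _ pi)) in x_range.
exists (fun k => \sum_j u j * M (pi j) k).
  move=> k; rewrite sumr_ge0 => [|j _]; last by rewrite mulr_ge0 ?clamp01_ge0.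
  rewrite -(M_col k) [leRHS](reindex_inj (@perm_inj _ pi)) ler_sum // => j _.
  by rewrite ler_piMl ?clamp01_le1.
split.
  rewrite -mass; under eq_bigr do rewrite mulr_suml.
  rewrite exchange_big; apply: eq_bigr => j _ /=.
  by rewrite -M_gibbs mulrC mulr_sumr; apply: eq_bigr => k _; rewrite mulrA.
rewrite thermo_curveE -/u; under eq_bigr do rewrite qE mulr_suml.
rewrite exchange_big; apply: eq_bigr => k _ /=; rewrite mulr_suml.
by apply: eq_bigr => j _; ring.
Qed.

Lemma exists_thermo_sorted (g p : vec) : exists pi : {perm 'I_d}, thermo_sorted g p pi.
Proof.
pose ratio k := p k / g k; pose le_ratio a b := ratio b <= ratio a.
have le_total : total le_ratio by move=> a b; exact: le_total.
have le_trans : transitive le_ratio by move=> a b c ab bc; exact: le_trans bc ab.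
have /tuple_permP[pi sorted_pi] : perm_eq (sort le_ratio (enum 'I_d)) (ord_tuple d).
  by rewrite val_ord_tuple perm_sort.
exists pi => i j leij.
have := sorted_leq_nth le_trans (fun a => lexx (ratio a)) i (sort_sorted le_total (enum 'I_d)).
move=> /(_ i j); rewrite !inE size_sort size_enum_ord !ltn_ord => /(_ isT isT leij).
by rewrite sorted_pi -!tnth_nth !tnth_mktuple !tnth_ord_tuple.
Qed.

Lemma stochastic_thermomaj (g p q : vec) (M : 'I_d -> 'I_d -> R) :
  (forall k, 0 < g k) -> (forall k, 0 <= p k) -> (forall i j, 0 <= M i j) ->
  (forall j, \sum_i M i j = 1) -> (forall i, \sum_j M i j * g j = g i) ->
  (forall i, q i = \sum_j M i j * p j) -> thermomaj g p q.
Proof.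
move=> g0 p0 M0 M_col M_gibbs qE.
have [pip sorted_p] := exists_thermo_sorted g p.
have [piq sorted_q] := exists_thermo_sorted g q.
exists pip, piq; split=> //; split=> // x x_range.
have [s s01 [<- ->]] := thermo_curve_stochastic piq g0 M0 M_col M_gibbs qE x_range.
exact: thermo_curve_ge_weighted.
Qed.

End Thermomajorisation.

Section PinnedStates.
Variables (R : realType) (d : nat).
Local Notation vec := (vec R d).

Lemma prob_vec_le1 (p : vec) a : prob_vec p -> p a <= 1.
Proof. by case=> p0 <-; rewrite (bigD1 a) //= lerDl sumr_ge0. Qed.

Lemma prob_vec_lt1 (p : vec) a b : prob_vec p -> (forall i, 0 < p i) -> a != b -> p a < 1.
Proof.
case=> p0 p1 p_gt0 neq_ab; rewrite -p1 (bigD1 a) //= (bigD1 b) 1?eq_sym //=.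
have := p_gt0 b; have : 0 <= \sum_(i | (i != a) && (i != b)) p i by exact: sumr_ge0.
lra.
Qed.

Lemma sum_ifeq_mull (a : 'I_d) (A B : R) (h : vec) :
  \sum_j (if j == a then A else B) * h j = A * h a + B * (\sum_j h j - h a).
Proof.
rewrite (bigD1 a) //= eqxx (bigD1 a (F := h)) //= addrAC subrr add0r mulr_sumr.
by congr (_ + _); apply: eq_bigr => j /negbTE ->.
Qed.

Lemma sum_ifeq (b : 'I_d) (A C : R) (h : vec) :
  \sum_i (if i == b then A else C * h i) = A + C * (\sum_j h j - h b).
Proof.
rewrite (bigD1 b) //= eqxx (bigD1 b (F := h)) //= addrAC subrr add0r mulr_sumr.
by congr (_ + _); apply: eq_bigr => j /negbTE ->.
Qed.

Definition pinned (w : vec) (b : 'I_d) (t : R) : vec :=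
  fun i => if i == b then t else (1 - t) / (1 - w b) * w i.

Lemma pinned_at (w : vec) b t : pinned w b t b = t.
Proof. by rewrite /pinned eqxx. Qed.

Lemma dist1_pinned (w : vec) (b : 'I_d) (t t' : R) : prob_vec w -> w b < 1 ->
  dist1 (pinned w b t) (pinned w b t') <= d%:R * (`|t - t'| / (1 - w b)).
Proof.
move=> pw wb1; have wb0 : 0 < 1 - w b by rewrite subr_gt0.
have [w0 _] := pw.
rewrite -[d in d%:R]card_ord mulr_natl -sumr_const; apply: ler_sum => k _; rewrite /pinned.
case: eqP => _; first by rewrite ler_pdivlMr // ler_piMr // lerBlDl lerDr w0.
rewrite -mulrBl -mulrBl opprB addrAC addrCA subrr addr0 distrC -mulrA normrM.
have wb_inv : 0 < (1 - w b)^-1 by rewrite invr_gt0.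
rewrite ler_wpM2l // ger0_norm ?mulr_ge0 ?(ltW wb_inv) //.
by rewrite ler_piMr ?(ltW wb_inv) ?prob_vec_le1.
Qed.

Definition pin_map (w : vec) (a b : 'I_d) (u v : R) (p : vec) : vec :=
  pinned w b (u * p a + v * (1 - p a)).

Lemma pin_map_thermomaj (w : vec) (a b : 'I_d) (u v : R) (p : vec) :
  prob_vec w -> (forall i, 0 < w i) -> w b < 1 -> 0 <= u <= 1 -> 0 <= v <= 1 ->
  u * w a + v * (1 - w a) = w b -> prob_vec p ->
  thermomaj w p (pin_map w a b u v p) /\ prob_vec (pin_map w a b u v p).
Proof.
move=> [w0 w1] w_gt0 wb1 /andP[u0 u1] /andP[v0 v1] w_fixed [p0 p1].
have wb0 : 0 < 1 - w b by rewrite subr_gt0.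
(* Column j sends mass u (j = a) or v (j <> a) to b and spreads the rest like w;
   w_fixed says exactly that M fixes w. *)
pose M i j := if j == a then (if i == b then u else (1 - u) / (1 - w b) * w i)
               else (if i == b then v else (1 - v) / (1 - w b) * w i).
have M0 i j : 0 <= M i j.
  rewrite /M; case: eqP => _; case: eqP => _ //;
  by rewrite mulr_ge0 ?divr_ge0 ?subr_ge0 // ltW.
have M_col j : \sum_i M i j = 1.
  by rewrite /M; case: eqP => _; rewrite sum_ifeq w1 divfK ?gt_eqF // subrKC.
have M_gibbs i : \sum_j M i j * w j = w i.
  rewrite sum_ifeq_mull w1; case: eqP => [->|_]; first by rewrite w_fixed.
  rewrite -w_fixed; field; rewrite w_fixed gt_eqF //.
have qE i : pin_map w a b u v p i = \sum_j M i j * p j.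
  by rewrite sum_ifeq_mull p1 /pin_map /pinned; case: eqP => _ //; ring.
have pq : prob_vec (pin_map w a b u v p).
  split=> [i|]; first by rewrite qE sumr_ge0 // => j _; rewrite mulr_ge0.
  under eq_bigr do rewrite qE.
  by rewrite exchange_big -p1; apply: eq_bigr => j _; rewrite -mulr_suml M_col mul1r.
by split=> //; apply: stochastic_thermomaj qE.
Qed.

End PinnedStates.

Lemma expr_le_half_index (R : realFieldType) (rho : R) (m N : nat) :
  0 <= rho < 1 -> (N <= m.*2 + 2)%N ->
  rho ^+ m <= ((1 + rho) / 2) ^+ N / ((1 + rho) / 2) ^+ 2.
Proof.
move=> /andP[rho0 rho1] leN; set r := (1 + rho) / 2.
have r0 : 0 < r by rewrite /r; lra.
have r1 : r <= 1 by rewrite /r; lra.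
have rho_r2 : rho <= r ^+ 2 by rewrite /r; nra.
rewrite ler_pdivlMr ?exprn_gt0 //.
apply: (@le_trans _ _ (r ^+ (m.*2 + 2)%N)); last by apply: ler_wiXn2l => //; exact: ltW.
rewrite exprD -mul2n exprM ler_wpM2r ?exprn_ge0 ?(ltW r0) //.
by rewrite lerXn2r ?nnegrE ?exprn_ge0 ?(ltW r0).
Qed.

Section ReachableStates.
Variables (R : realType) (d : nat) (gam Gam : vec R d).
Local Open Scope classical_set_scope.

Lemma F_N_chain_reach N (p : vec R d) : chain_reach gam Gam N p -> F_N gam Gam N p.
Proof.
move=> reach_p; exists 1%N, (fun=> 1), (fun=> p); do 3?split => //.
  by rewrite big_ord1.
by apply: funext => k; rewrite big_ord1 mul1r.
Qed.

Lemma F_AB_geometric (t : vec R d) (C r : R) : 0 <= r < 1 ->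
  (forall N, (0 < N)%N -> exists p, F_N gam Gam N p /\ dist1 p t <= C * r ^+ N) ->
  F_AB gam Gam t.
Proof.
move=> /andP[r0 r1] approx_t eps eps_gt0.
have : (fun n => C * r ^+ n) @ \oo --> (0 : R).
  by rewrite -(mulr0 C); apply: cvgM; [exact: cvg_cst | apply: cvg_expr; rewrite ger0_norm].
move/cvgr0_norm_lt => /(_ _ eps_gt0) [M _ small_M].
have [p [Fp dist_p]] := approx_t M.+1 isT.
exists M.+1, p; split=> //; rewrite /dist1.
under eq_bigr do rewrite distrC.
exact: le_lt_trans dist_p (le_lt_trans (ler_norm _) (small_M _ (leqnSn M))).
Qed.

End ReachableStates.

Lemma ord_first_neq_last d (hd : (1 < d)%N) : ord_first hd != ord_last hd.
Proof. by rewrite -val_eqE /=; case: d hd => [|[|n]]. Qed.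

Section Strokes.
Variables (R : realType) (d : nat) (hd : (1 < d)%N) (gam Gam : vec R d).
Local Notation vec := (vec R d).
Local Notation e1 := (ord_first hd).
Local Notation ed := (ord_last hd).
Hypotheses (gam_prob : prob_vec gam) (Gam_prob : prob_vec Gam)
  (gam_gt0 : forall i, 0 < gam i) (Gam_gt0 : forall i, 0 < Gam i)
  (gam_lt : gam ed < gam e1) (Gam_le : Gam ed <= Gam e1).

Lemma gam_e1_lt1 : gam e1 < 1.
Proof. exact: prob_vec_lt1 gam_prob gam_gt0 (ord_first_neq_last hd). Qed.

Lemma gam_ed_lt1 : gam ed < 1.
Proof. by apply: (prob_vec_lt1 (b := e1)); rewrite // eq_sym ord_first_neq_last. Qed.

Lemma Gam_ed_lt1 : Gam ed < 1.
Proof. by apply: (prob_vec_lt1 (b := e1)); rewrite // eq_sym ord_first_neq_last. Qed.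

Definition cold_shift : R := (gam e1 - gam ed) / (1 - gam ed).
Definition hot_ratio : R := Gam ed / Gam e1.
Definition contraction : R := hot_ratio * (1 - cold_shift).

Lemma cold_shift_gt0 : 0 < cold_shift.
Proof. by rewrite divr_gt0 // subr_gt0 ?gam_ed_lt1. Qed.

Lemma cold_shift_le1 : cold_shift <= 1.
Proof.
by rewrite ler_pdivrMr ?subr_gt0 ?gam_ed_lt1 // mul1r lerD2r ltW ?gam_e1_lt1.
Qed.

Lemma hot_ratio_ge0 : 0 <= hot_ratio.
Proof. by rewrite divr_ge0 // ltW. Qed.

Lemma hot_ratio_le1 : hot_ratio <= 1.
Proof. by rewrite ler_pdivrMr // mul1r. Qed.

Lemma contraction_ge0 : 0 <= contraction.
Proof. by rewrite mulr_ge0 ?hot_ratio_ge0 // subr_ge0 cold_shift_le1. Qed.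

Lemma contraction_lt1 : contraction < 1.
Proof.
have := cold_shift_gt0; have := cold_shift_le1; have := hot_ratio_le1.
rewrite /contraction; move: hot_ratio cold_shift => h c; nra.
Qed.

Definition pin_site (l : bool) : 'I_d := if l then e1 else ed.

Definition stroke (l : bool) : vec -> vec :=
  if l then pin_map gam ed e1 1 cold_shift else pin_map Gam e1 ed hot_ratio 0.

Lemma bath_pin_site_lt1 l : bath gam Gam l (pin_site l) < 1.
Proof. by case: l; [exact: gam_e1_lt1 | exact: Gam_ed_lt1]. Qed.

Lemma stroke_thermomaj l p : prob_vec p ->
  thermomaj (bath gam Gam l) p (stroke l p) /\ prob_vec (stroke l p).
Proof.
move=> p_prob; case: l; rewrite /stroke /bath; apply: pin_map_thermomaj => //.
- exact: gam_e1_lt1.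
- by rewrite ler01 lexx.
- by rewrite ltW ?cold_shift_gt0 ?cold_shift_le1.
- by rewrite /cold_shift mul1r divfK ?gt_eqF ?subr_gt0 ?gam_ed_lt1 //; ring.
- exact: Gam_ed_lt1.
- by rewrite hot_ratio_ge0 hot_ratio_le1.
- by rewrite lexx ler01.
- by rewrite /hot_ratio mul0r addr0 divfK ?gt_eqF.
Qed.

Fixpoint alt_chain (b : bool) (k : nat) : vec :=
  if k is k'.+1 then stroke (if odd k' then b else ~~ b) (alt_chain b k')
  else bath gam Gam b.

Lemma alt_chain_prob b k : prob_vec (alt_chain b k).
Proof.
elim: k => [|k IH]; first by case: b.
by have [] := stroke_thermomaj (if odd k then b else ~~ b) IH.
Qed.

Lemma alt_chain_reach b N : (0 < N)%N -> chain_reach gam Gam N (alt_chain b N.-1).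
Proof.
move=> N_gt0; split=> //; exists b, (alt_chain b); split=> //.
split=> [k _|]; first exact: alt_chain_prob.
split=> // k _.
by have [] := stroke_thermomaj (if odd k then b else ~~ b) (alt_chain_prob b k).
Qed.

(* The chain of n strokes whose last stroke is [stroke l] (for n = 0, the bath l). *)
Definition approximant (l : bool) (n : nat) : vec := alt_chain (odd n (+) l) n.

Lemma approximantSS l n : approximant l n.+2 = stroke l (stroke (~~ l) (approximant l n)).
Proof. by rewrite /approximant /= negbK; case: (odd n); case: l. Qed.

Lemma approximant_pinned l n k :
  approximant l n k = pinned (bath gam Gam l) (pin_site l) (approximant l n (pin_site l)) k.
Proof.
case: n => [|n].
  rewrite /approximant /pinned /=; case: eqP => [-> //|_].
  by rewrite divff ?mul1r // gt_eqF // subr_gt0 bath_pin_site_lt1.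
rewrite /approximant /=; have -> : (if odd n then ~~ odd n (+) l else ~~ (~~ odd n (+) l)) = l.
  by case: (odd n); case: l.
by case: l; rewrite /stroke /pin_map pinned_at.
Qed.

Lemma tilde_den_gt0 : 0 < tilde_den hd gam Gam.
Proof.
rewrite /tilde_den subr_gt0; apply: (@lt_le_trans _ _ (Gam ed * (1 - gam ed))).
  by rewrite ltr_pM2l // ltrD2l ltrN2.
by rewrite ler_wpM2r // subr_ge0 ltW ?gam_ed_lt1.
Qed.

Definition tilde_level (l : bool) : R :=
  (if l then Gam e1 else Gam ed) * (gam e1 - gam ed) / tilde_den hd gam Gam.

Lemma stroke_pair_level l p :
  stroke l (stroke (~~ l) p) (pin_site l)
    = tilde_level l + contraction * (p (pin_site l) - tilde_level l).
Proof.
have := tilde_den_gt0; have := gam_ed_lt1; have := Gam_gt0 e1.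
case: l; rewrite /stroke /pin_map /= !pinned_at /tilde_level /contraction;
  rewrite /cold_shift /hot_ratio /tilde_den => G1 gd den; field;
  by rewrite !gt_eqF // subr_gt0.
Qed.

Lemma approximant_level l m k :
  approximant l (m.*2 + k) (pin_site l) - tilde_level l
    = contraction ^+ m * (approximant l k (pin_site l) - tilde_level l).
Proof.
elim: m => [|m IH]; first by rewrite mul1r.
by rewrite doubleS !addSn approximantSS stroke_pair_level addrAC subrr add0r IH exprS mulrA.
Qed.

Definition target (l : bool) : vec :=
  pinned (bath gam Gam l) (pin_site l) (tilde_level l).

Lemma dist1_approximant_target l m k :
  dist1 (approximant l (m.*2 + k)) (target l)
    <= d%:R * (contraction ^+ m * `|approximant l k (pin_site l) - tilde_level l|
               / (1 - bath gam Gam l (pin_site l))).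
Proof.
have -> : dist1 (approximant l (m.*2 + k)) (target l)
    = dist1 (pinned (bath gam Gam l) (pin_site l) (approximant l (m.*2 + k) (pin_site l)))
            (target l).
  by apply: eq_bigr => i _; rewrite -approximant_pinned.
rewrite -(ger0_norm (exprn_ge0 m contraction_ge0)) -normrM -approximant_level.
by apply: dist1_pinned; [case: l | exact: bath_pin_site_lt1].
Qed.

Lemma target_geometric_approx l :
  exists C r : R, 0 <= r < 1 /\ forall N, (0 < N)%N ->
    exists p, F_N gam Gam N p /\ dist1 p (target l) <= C * r ^+ N.
Proof.
have rho01 : 0 <= contraction < 1.
  by rewrite contraction_ge0 ?contraction_lt1.
pose r := (1 + contraction) / 2.
have r01 : 0 <= r < 1 by rewrite /r; move: rho01; lra.
pose w := bath gam Gam l; pose j := pin_site l; pose x := tilde_level l.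
have wj1 : 0 < 1 - w j by rewrite subr_gt0 bath_pin_site_lt1.
pose C := d%:R * ((1 + `|x|) / (1 - w j)) / r ^+ 2.
exists C, r; split=> // N N_gt0; pose n := N.-1; pose m := n./2.
exists (approximant l n); split.
  by apply: F_N_chain_reach; exact: alt_chain_reach.
have n_split : n = (m.*2 + odd n)%N by rewrite addnC odd_double_half.
rewrite n_split; apply: le_trans (dist1_approximant_target l m (odd n)) _ => //.
have y_bound : `|approximant l (odd n) j - x| <= 1 + `|x|.
  have [y0 _] := alt_chain_prob (odd (odd n) (+) l) (odd n).
  apply: le_trans (ler_normB _ _) _; rewrite lerD2r ger0_norm ?y0 //.
  exact: prob_vec_le1 (alt_chain_prob _ _).
have pow_bound : contraction ^+ m <= r ^+ N / r ^+ 2.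
  apply: expr_le_half_index => //.
  by rewrite -(prednK N_gt0) -/n n_split addn2 ltnS -addn1 leq_add2l leq_b1.
have -> : C * r ^+ N = d%:R * (r ^+ N / r ^+ 2 * ((1 + `|x|) / (1 - w j))) by rewrite /C; ring.
rewrite ler_wpM2l // -mulrA ler_pM ?exprn_ge0 ?divr_ge0 ?(ltW wj1) //.
  exact: contraction_ge0.
by rewrite ler_wpM2r ?invr_ge0 ?(ltW wj1).
Qed.

Lemma tilde_gam_target : tilde_gam hd gam Gam = target true.
Proof. by []. Qed.

Lemma tilde_Gam_target : tilde_Gam hd gam Gam = target false.
Proof. by []. Qed.

End Strokes.

Section Gibbs.
Variables (R : realType) (d : nat) (hd : (1 < d)%N) (E : 'I_d -> R).

Lemma partition_gt0 (a : R) : 0 < \sum_i expR (- (a * E i)).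
Proof.
rewrite (bigD1 (ord_first hd)) //= ltr_pwDl ?expR_gt0 //.
by rewrite sumr_ge0 // => i _; exact: expR_ge0.
Qed.

Lemma gibbs_gt0 a k : 0 < gibbs E a k.
Proof. by rewrite divr_gt0 ?expR_gt0 ?partition_gt0. Qed.

Lemma gibbs_prob a : prob_vec (gibbs E a).
Proof.
split=> [k|]; first exact/ltW/gibbs_gt0.
by rewrite -mulr_suml divff // gt_eqF // partition_gt0.
Qed.

Lemma gibbs_le a i j : 0 <= a -> E i <= E j -> gibbs E a j <= gibbs E a i.
Proof.
move=> a0 Eij; rewrite ler_pM2r ?invr_gt0 ?partition_gt0 // ler_expR lerN2.
exact: ler_wpM2l.
Qed.

Lemma gibbs_lt a i j : 0 < a -> E i < E j -> gibbs E a j < gibbs E a i.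
Proof.
move=> a0 Eij; rewrite ltr_pM2r ?invr_gt0 ?partition_gt0 // ltr_expR ltrN2.
by rewrite ltr_pM2l.
Qed.

End Gibbs.

Theorem proposition4 (R : realType) (d : nat) (hd : (1 < d)%N)
  (E : 'I_d -> R)
  (hE : forall i j : 'I_d, (i <= j)%N -> E i <= E j)
  (hE1d : E (ord_first hd) < E (ord_last hd))
  (alpha beta : R) (hbeta : 0 <= beta) (hab : beta < alpha) :
  let gam := gibbs E alpha in
  let Gam := gibbs E beta in
  let tg := tilde_gam hd gam Gam in
  let tG := tilde_Gam hd gam Gam in
  F_AB gam Gam tg /\ F_AB gam Gam tG /\
  (exists (C r : R), 0 <= r < 1 /\
     forall N : nat, (0 < N)%N ->
       exists p, F_N gam Gam N p /\ dist1 p tg <= C * r ^+ N) /\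
  (exists (C r : R), 0 <= r < 1 /\
     forall N : nat, (0 < N)%N ->
       exists p, F_N gam Gam N p /\ dist1 p tG <= C * r ^+ N).
Proof.
move=> gam Gam tg tG.
have gam_lt : gam (ord_last hd) < gam (ord_first hd).
  exact: gibbs_lt (le_lt_trans hbeta hab) hE1d.
have Gam_le : Gam (ord_last hd) <= Gam (ord_first hd).
  exact: gibbs_le hbeta (ltW hE1d).
have rate := target_geometric_approx (gibbs_prob hd E alpha) (gibbs_prob hd E beta)
  (gibbs_gt0 hd E alpha) (gibbs_gt0 hd E beta) gam_lt Gam_le.
have [Cg [rg [rg01 rate_g]]] := rate true.
have [CG [rG [rG01 rate_G]]] := rate false.
rewrite /tg /tG tilde_gam_target tilde_Gam_target.
split; first exact: F_AB_geometric rg01 rate_g.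
split; first exact: F_AB_geometric rG01 rate_G.
by split; [exists Cg, rg | exists CG, rG].
Qed.
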